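(* Let $G$ and $H$ be graphs without isolated vertices. If $K_2\times G$ and $K_2\times H$ are isomorphic as graphs, then the neighborhood complexes $N(G)$ and $N(H)$ are isomorphic as simplicial complexes. If moreover $G$ and $H$ are locally finite and stiff, then conversely $N(G)\cong N(H)$ implies $K_2\times G\cong K_2\times H$.
   Context: A graph $G$ is a set $V(G)$ together with a symmetric subset $E(G) \subset V(G)\times V(G)$ (undirected, no multiple edges, loops allowed; graphs may be infinite). For $v \in V(G)$, $N(v)=\{w : (v,w)\in E(G)\}$; $v$ is isolated if $N(v)=\emptyset$. $G$ is locally finite if every $N(v)$ is finite. $G$ is stiff if for vertices $v,w$, $N(v)\subset N(w)$ implies $v=w$. $K_2$ is the graph with $V(K_2)=\{1,2\}$ and edges $(1,2),(2,1)$. The tensor product $G\times H$ has vertex set $V(G)\times V(H)$, with $((x,y),(x',y'))$ an edge iff $(x,x')\in E(G)$ and $(y,y')\in E(H)$. The neighborhood complex $N(G)$ is the abstract simplicial complex whose vertices are the non-isolated vertices of $G$ and whose simplices are the finite subsets contained in $N(v)$ for some vertex $v$. *)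

(* graphs may be infinite, so vertex sets are arbitrary Types. *)
From Stdlib Require Import List.
Import ListNotations.

(* A graph: vertex type with a symmetric edge relation (loops allowed). *)
Record graph : Type := Graph {
  vert : Type;
  adj : vert -> vert -> Prop;
  adj_sym : forall x y, adj x y -> adj y x
}.

Definition isolated (G : graph) (v : vert G) : Prop :=
  forall w, ~ adj G v w.

Definition no_isolated (G : graph) : Prop :=
  forall v : vert G, ~ isolated G v.

Definition locally_finite (G : graph) : Prop :=
  forall v : vert G, exists l : list (vert G), forall w, adj G v w -> In w l.

Definition stiff (G : graph) : Prop :=
  forall v w : vert G, (forall x, adj G v x -> adj G w x) -> v = w.

Definition K2 : graph.
Proof.
  refine (@Graph bool (fun x y => x <> y) _).
  intros x y H; congruence.
Defined.

Definition tensor (G H : graph) : graph.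
Proof.
  refine (@Graph (vert G * vert H)
            (fun p q => adj G (fst p) (fst q) /\ adj H (snd p) (snd q)) _).
  intros p q [H1 H2]; split; apply adj_sym; assumption.
Defined.

Definition graph_iso (G H : graph) : Prop :=
  exists (f : vert G -> vert H) (g : vert H -> vert G),
    (forall x, g (f x) = x) /\ (forall y, f (g y) = y) /\
    (forall x y, adj G x y <-> adj H (f x) (f y)).

(* Neighborhood complex N(G): vertices are the non-isolated vertices of G;
   simplices are finite subsets (represented by lists, read as their sets of
   elements) contained in N(v) for some vertex v. *)
Definition nc_vertex (G : graph) : Type := { v : vert G | ~ isolated G v }.

Definition nc_simplex (G : graph) (s : list (nc_vertex G)) : Prop :=
  exists v : vert G, forall x, In x s -> adj G v (proj1_sig x).

Definition nc_iso (G H : graph) : Prop :=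
  exists (f : nc_vertex G -> nc_vertex H) (g : nc_vertex H -> nc_vertex G),
    (forall x, g (f x) = x) /\ (forall y, f (g y) = y) /\
    (forall s : list (nc_vertex G), nc_simplex G s <-> nc_simplex H (map f s)).

(* K2 x G is the bipartite double cover of G, and its "common neighbour"
   classes are the classes of G placed on either sheet; the sheet swap [flip]
   exchanges the two copies of each class.  An isomorphism d : K2 x G ~ K2 x H
   yields a second such involution J = d^-1 flip d.  As in division by two,
   [flip] and [J] link the classes into alternating chains, so there is a union
   A of classes meeting every [flip]-pair and every [J]-pair exactly once.
   Identifying G with A via [snd] and reading off the H-coordinate of d gives
   a bijection of vertices which maps each N(u) into some N(w), which is what
   N(G) ~ N(H) amounts to.

   Conversely, an isomorphism f : N(G) ~ N(H) maps the finite simplex N(v)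
   into some N(h v); stiffness makes h v unique and forces equality, so
   adj v x <-> adj (h v) (f x), and (true, v) |-> (true, h v),
   (false, v) |-> (false, f v) is an isomorphism K2 x G ~ K2 x H. *)

From Stdlib Require Import List Arith Lia Relations Classical ClassicalEpsilon
  FunctionalExtensionality PropExtensionality ProofIrrelevance.

Lemma equivalence_representative {A : Type} (R : relation A) :
  equivalence A R ->
  exists rep : A -> A, (forall x, R x (rep x)) /\ (forall x y, R x y -> rep x = rep y).
Proof.
  intros [R_refl R_trans R_sym].
  exists (fun x => epsilon (inhabits x) (R x)). split.
  - intro x. apply epsilon_spec. exists x. apply R_refl.
  - intros x y Rxy.
    assert (same_class : R x = R y).
    { extensionality z. apply propositional_extensionality.
      split; intro; eauto. }
    rewrite same_class. apply epsilon_inh_irrelevance. exists y. apply R_refl.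
Qed.

Lemma iter_hom {A : Type} (R : relation A) (f : A -> A) :
  (forall x y, R x y -> R (f x) (f y)) ->
  forall n x y, R x y -> R (Nat.iter n f x) (Nat.iter n f y).
Proof. intros f_R n; induction n; simpl; auto. Qed.

Lemma iter_cancel {A : Type} (f g : A -> A) :
  (forall x, f (g x) = x) -> forall n x, Nat.iter n f (Nat.iter n g x) = x.
Proof.
  intros fg n; induction n as [|n IH]; intro x; [reflexivity|].
  rewrite Nat.iter_succ_r, Nat.iter_succ, fg. apply IH.
Qed.

Lemma clos_rst_hom {A B : Type} (R : relation A) (R' : relation B) (f : A -> B) :
  (forall x y, R x y -> R' (f x) (f y)) ->
  forall x y, clos_refl_sym_trans A R x y -> clos_refl_sym_trans B R' (f x) (f y).
Proof.
  intros f_R x y Rxy. induction Rxy.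
  - apply rst_step; auto.
  - apply rst_refl.
  - apply rst_sym; auto.
  - eapply rst_trans; eauto.
Qed.

Section CommonTransversal.

Variables (X : Type) (R : relation X) (i j : X -> X).
Hypotheses (i_invol : forall x, i (i x) = x) (j_invol : forall x, j (j x) = x).
Hypotheses (i_R : forall x y, R x y -> R (i x) (i y))
           (j_R : forall x y, R x y -> R (j x) (j y)).

Let sim := clos_refl_sym_trans X R.

Hypotheses (sim_i : forall x, ~ sim x (i x)) (sim_j : forall x, ~ sim x (j x)).

(* The classes of [sim] form chains in which the pairings [i] and [j]
   alternate; [t] moves two steps along such a chain. *)
Let t x := j (i x).
Let t' x := i (j x).

Lemma iter_t_i n x : Nat.iter n t' (i x) = i (Nat.iter n t x).
Proof.
  induction n as [|n IH]; [reflexivity|].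
  simpl. rewrite IH. reflexivity.
Qed.

Lemma sim_iter f (f_R : forall x y, R x y -> R (f x) (f y)) n x y :
  sim x y -> sim (Nat.iter n f x) (Nat.iter n f y).
Proof. apply clos_rst_hom, iter_hom, f_R. Qed.

Lemma t_R x y : R x y -> R (t x) (t y).
Proof. unfold t; auto. Qed.

Lemma t'_R x y : R x y -> R (t' x) (t' y).
Proof. unfold t'; auto. Qed.

Lemma t_t' x : t (t' x) = x.
Proof. unfold t, t'. rewrite i_invol. apply j_invol. Qed.

Lemma t'_t x : t' (t x) = x.
Proof. unfold t, t'. rewrite j_invol. apply i_invol. Qed.

(* Since [i] conjugates [t] to its inverse, [t^(2m) w ~ i w] would give
   [t^m w ~ i (t^m w)], and [t^(2m+1) w ~ i w] would give [j u ~ u] for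
   [u = i (t^m w)]. *)
Lemma not_sim_iter_i k w : ~ sim (Nat.iter k t w) (i w).
Proof.
  intro hsim.
  destruct (Nat.Even_or_Odd k) as [[m ->]|[m ->]];
    apply (sim_iter t' t'_R m) in hsim; rewrite iter_t_i in hsim.
  - replace (2 * m) with (m + m) in hsim by lia.
    rewrite Nat.iter_add, (iter_cancel t' t t'_t) in hsim.
    exact (sim_i _ hsim).
  - replace (2 * m + 1) with (m + S m) in hsim by lia.
    rewrite Nat.iter_add, (iter_cancel t' t t'_t), Nat.iter_succ in hsim.
    apply (sim_j (i (Nat.iter m t w))). apply rst_sym. exact hsim.
Qed.

Definition orbit_sim x y := exists m n, sim (Nat.iter m t x) (Nat.iter n t y).

Lemma orbit_sim_equiv : equivalence X orbit_sim.
Proof.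
  split.
  - intro x. exists 0, 0. apply rst_refl.
  - intros x y z [a [b hxy]] [c [e hyz]]. exists (c + a), (b + e).
    apply (sim_iter t t_R c) in hxy. apply (sim_iter t t_R b) in hyz.
    rewrite <- !Nat.iter_add in *. rewrite Nat.add_comm in hyz.
    eapply rst_trans; eassumption.
  - intros x y [m [n hxy]]. exists n, m. apply rst_sym, hxy.
Qed.

Lemma sim_orbit_sim x y : sim x y -> orbit_sim x y.
Proof. intro hxy. exists 0, 0. exact hxy. Qed.

Lemma orbit_sim_t x : orbit_sim x (t x).
Proof. exists 1, 0. apply rst_refl. Qed.

Lemma orbit_sim_i x y : orbit_sim x y -> orbit_sim (i x) (i y).
Proof.
  intros [m [n hxy]]. exists n, m.
  apply (clos_rst_hom R R i i_R) in hxy. rewrite <- !iter_t_i in hxy.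
  apply (sim_iter t t_R (n + m)) in hxy.
  rewrite Nat.iter_add, (iter_cancel t t' t_t') in hxy.
  rewrite Nat.add_comm, Nat.iter_add, (iter_cancel t t' t_t') in hxy.
  exact hxy.
Qed.

Lemma not_orbit_sim_i x : ~ orbit_sim x (i x).
Proof.
  intros [m [n hsim]]. destruct (Nat.le_ge_cases n m) as [le_nm|le_mn].
  - replace m with (n + (m - n)) in hsim by lia.
    apply (sim_iter t' t'_R n) in hsim.
    rewrite Nat.iter_add, !(iter_cancel t' t t'_t) in hsim.
    exact (not_sim_iter_i _ _ hsim).
  - replace n with (m + (n - m)) in hsim by lia.
    apply (sim_iter t' t'_R m) in hsim.
    rewrite Nat.iter_add, !(iter_cancel t' t t'_t) in hsim.
    apply (not_sim_iter_i (n - m) (i x)). rewrite i_invol. apply rst_sym, hsim.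
Qed.

Let orbit_pair_sim x y := orbit_sim x y \/ orbit_sim (i x) y.

Lemma orbit_pair_sim_equiv : equivalence X orbit_pair_sim.
Proof.
  destruct orbit_sim_equiv as [osim_refl osim_trans osim_sym].
  assert (osim_i' : forall x y, orbit_sim (i x) y -> orbit_sim x (i y)).
  { intros x y hxy. rewrite <- (i_invol x). apply orbit_sim_i, hxy. }
  split; red; unfold orbit_pair_sim.
  - intro x. left. apply osim_refl.
  - intros x y z [hxy|hxy] [hyz|hyz].
    + left; eauto.
    + right. apply (osim_trans _ (i y)); [apply orbit_sim_i|]; assumption.
    + right; eauto.
    + left. apply (osim_trans _ (i y)); [apply osim_i'|]; assumption.
  - intros x y [hxy|hxy]; [left|right]; apply osim_sym; [exact hxy|].
    apply osim_i', hxy.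
Qed.

Theorem common_transversal :
  exists S : X -> Prop,
    (forall x y, R x y -> S x -> S y) /\
    (forall x, S x <-> ~ S (i x)) /\
    (forall x, S x <-> ~ S (j x)).
Proof.
  destruct orbit_sim_equiv as [osim_refl osim_trans osim_sym].
  destruct (equivalence_representative orbit_pair_sim orbit_pair_sim_equiv)
    as [rep [rep_spec rep_eq]].
  set (S x := orbit_sim x (rep x)).
  assert (S_orbit_sim : forall x y, orbit_sim x y -> S x -> S y).
  { intros x y hxy hx. unfold S. rewrite <- (rep_eq x y) by (left; exact hxy).
    eauto. }
  assert (S_i : forall x, S x <-> ~ S (i x)).
  { intro x. unfold S. rewrite <- (rep_eq x (i x)) by (right; apply osim_refl).
    split.
    - intros hx hix. apply (not_orbit_sim_i x). eauto.
    - intro hix. destruct (rep_spec x); tauto. }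
  exists S. split; [|split; [exact S_i|]].
  - intros x y Rxy. apply S_orbit_sim, sim_orbit_sim, rst_step, Rxy.
  - intro x. assert (hj : orbit_sim (i x) (j x)).
    { rewrite <- (i_invol x) at 2. apply orbit_sim_t. }
    rewrite S_i. split; intros h1 h2; apply h1; eauto.
Qed.

End CommonTransversal.

Definition common_nbr (X : graph) (p q : vert X) : Prop :=
  exists r, adj X p r /\ adj X q r.

Definition has_common_nbr (X : graph) (s : list (vert X)) : Prop :=
  exists v, forall x, In x s -> adj X v x.

Definition maps_nbhds_into (G H : graph) (f : vert G -> vert H) : Prop :=
  forall u, exists w, forall x, adj G u x -> adj H w (f x).

Lemma common_nbr_hom (X Y : graph) (f : vert X -> vert Y) :
  (forall p q, adj X p q -> adj Y (f p) (f q)) ->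
  forall p q, common_nbr X p q -> common_nbr Y (f p) (f q).
Proof. intros f_adj p q [r [hp hq]]. exists (f r). auto. Qed.

Definition flip {A : Type} (p : bool * A) : bool * A := (negb (fst p), snd p).

Lemma flip_flip {A : Type} (p : bool * A) : flip (flip p) = p.
Proof. destruct p as [[|] a]; reflexivity. Qed.

Lemma tensor_K2_adj (G : graph) b v c w :
  adj (tensor K2 G) (b, v) (c, w) <-> b <> c /\ adj G v w.
Proof. reflexivity. Qed.

Lemma tensor_K2_adj_flip (G : graph) p q :
  adj (tensor K2 G) p q -> adj (tensor K2 G) (flip p) (flip q).
Proof.
  destruct p as [[|] v], q as [[|] w]; intros [hb hvw]; split; simpl in *; congruence.
Qed.

Lemma common_nbr_fst (G : graph) p q : common_nbr (tensor K2 G) p q -> fst p = fst q.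
Proof.
  destruct p as [[|] v], q as [[|] w]; intros [[[|] r] [[h1 _] [h2 _]]];
    simpl in *; congruence.
Qed.

Lemma clos_common_nbr_fst (G : graph) p q :
  clos_refl_sym_trans _ (common_nbr (tensor K2 G)) p q -> fst p = fst q.
Proof.
  intro hpq. induction hpq; try congruence. apply common_nbr_fst; assumption.
Qed.

Lemma not_clos_common_nbr_flip (G : graph) p :
  ~ clos_refl_sym_trans _ (common_nbr (tensor K2 G)) p (flip p).
Proof.
  intro hp. apply clos_common_nbr_fst in hp. destruct p as [[|] v]; discriminate.
Qed.

Definition side {A : Type} (P : bool * A -> Prop) (a : A) : bool :=
  if excluded_middle_informative (P (true, a)) then true else false.

Section Sides.

Variables (A : Type) (P : bool * A -> Prop).
Hypothesis P_flip : forall p, P p <-> ~ P (flip p).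

Lemma side_spec a : P (side P a, a).
Proof.
  unfold side. destruct excluded_middle_informative as [h|h]; [exact h|].
  apply NNPP. intro hf. apply h, (proj2 (P_flip (true, a))), hf.
Qed.

Lemma side_unique b a : P (b, a) -> side P a = b.
Proof.
  intro hb. unfold side.
  destruct excluded_middle_informative as [h|h], b; try reflexivity.
  - exfalso. apply (proj1 (P_flip (true, a)) h hb).
  - contradiction.
Qed.

End Sides.

Record graph_isomorphism (X Y : graph) := {
  iso_fwd : vert X -> vert Y;
  iso_bwd : vert Y -> vert X;
  iso_bwd_fwd : forall x, iso_bwd (iso_fwd x) = x;
  iso_fwd_bwd : forall y, iso_fwd (iso_bwd y) = y;
  iso_adj : forall x y, adj X x y <-> adj Y (iso_fwd x) (iso_fwd y)
}.
Arguments iso_fwd {X Y} _ _.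
Arguments iso_bwd {X Y} _ _.
Arguments iso_bwd_fwd {X Y} _ _.
Arguments iso_fwd_bwd {X Y} _ _.
Arguments iso_adj {X Y} _ _ _.

Definition iso_inv {X Y : graph} (d : graph_isomorphism X Y) : graph_isomorphism Y X.
Proof.
  refine (Build_graph_isomorphism Y X (iso_bwd d) (iso_fwd d)
            (iso_fwd_bwd d) (iso_bwd_fwd d) _).
  intros x y. rewrite (iso_adj d), !iso_fwd_bwd. reflexivity.
Defined.

Lemma common_nbr_iso {X Y : graph} (d : graph_isomorphism X Y) p q :
  common_nbr X p q -> common_nbr Y (iso_fwd d p) (iso_fwd d q).
Proof. apply common_nbr_hom. intros x y. apply iso_adj. Qed.

(* [A] selects one point in each fiber of [snd] and in each fiber of
   [snd \o d], and is a union of common-neighbour classes. *)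
Definition adapted {G H : graph} (d : graph_isomorphism (tensor K2 G) (tensor K2 H))
    (A : bool * vert G -> Prop) : Prop :=
  (forall p q, common_nbr (tensor K2 G) p q -> A p -> A q) /\
  (forall p, A p <-> ~ A (flip p)) /\
  (forall p, A p <-> ~ A (iso_bwd d (flip (iso_fwd d p)))).

Definition half {G H : graph} (d : graph_isomorphism (tensor K2 G) (tensor K2 H))
    (A : bool * vert G -> Prop) (v : vert G) : vert H :=
  snd (iso_fwd d (side A v, v)).

Section DoubleCoverIso.

Variables (G H : graph) (d : graph_isomorphism (tensor K2 G) (tensor K2 H)).

Let J (p : bool * vert G) : bool * vert G := iso_bwd d (flip (iso_fwd d p)).

Lemma adapted_exists : exists A, adapted d A.
Proof.
  assert (fwd_cn := common_nbr_iso d).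
  assert (bwd_cn : forall p q, common_nbr _ p q ->
                   common_nbr (tensor K2 G) (iso_bwd d p) (iso_bwd d q))
    by apply (common_nbr_iso (iso_inv d)).
  assert (flip_cn :=
            common_nbr_hom (tensor K2 H) (tensor K2 H) flip (tensor_K2_adj_flip H)).
  apply (common_transversal _ (common_nbr (tensor K2 G)) flip J).
  - apply flip_flip.
  - intro p. unfold J. rewrite iso_fwd_bwd, flip_flip. apply iso_bwd_fwd.
  - apply common_nbr_hom, tensor_K2_adj_flip.
  - intros p q hpq. unfold J. auto.
  - apply not_clos_common_nbr_flip.
  - intros p hp. apply (clos_rst_hom _ _ (iso_fwd d) fwd_cn) in hp.
    unfold J in hp. rewrite iso_fwd_bwd in hp.
    exact (not_clos_common_nbr_flip H _ hp).
Qed.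

Lemma adapted_inverse A : adapted d A -> adapted (iso_inv d) (fun q => A (iso_bwd d q)).
Proof.
  intros [A_cn [A_flip A_J]]. split; [|split]; simpl.
  - intros q q' hqq'. apply A_cn, (common_nbr_iso (iso_inv d)), hqq'.
  - intro q. rewrite (A_J (iso_bwd d q)), iso_fwd_bwd. reflexivity.
  - intro q. rewrite iso_bwd_fwd. apply A_flip.
Qed.

Lemma half_nbhd A : adapted d A -> maps_nbhds_into G H (half d A).
Proof.
  intros [A_cn [A_flip _]] u.
  destruct (classic (exists x0, adj G u x0)) as [[x0 hx0]|no_nbr].
  - set (b := side A x0).
    exists (snd (iso_fwd d (negb b, u))). intros x hx.
    assert (side_x : side A x = b).
    { apply side_unique; [exact A_flip|]. apply (A_cn (b, x0)).
      - exists (negb b, u).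
        split; split; simpl; try (destruct b; discriminate); apply adj_sym; assumption.
      - apply side_spec, A_flip. }
    unfold half. rewrite side_x.
    assert (hadj : adj (tensor K2 G) (negb b, u) (b, x)).
    { split; simpl; [destruct b; discriminate|exact hx]. }
    apply (iso_adj d) in hadj. exact (proj2 hadj).
  - exists (snd (iso_fwd d (true, u))). intros x hx. exfalso. eauto.
Qed.

Lemma half_cancel A (B : bool * vert H -> Prop) :
  (forall p, A p <-> ~ A (flip p)) -> (forall q, B q <-> ~ B (flip q)) ->
  (forall p, A p -> B (iso_fwd d p)) ->
  forall v, half (iso_inv d) B (half d A v) = v.
Proof.
  intros A_flip B_flip A_B v. unfold half.
  pose proof (A_B _ (side_spec _ A A_flip v)) as hB.
  transitivity (snd (iso_bwd d (iso_fwd d (side A v, v))));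
    [|rewrite iso_bwd_fwd; reflexivity].
  destruct (iso_fwd d (side A v, v)) as [c w]. simpl.
  rewrite (side_unique _ B B_flip c w hB). reflexivity.
Qed.

End DoubleCoverIso.

Lemma tensor_K2_iso_nbhd_bijection (G H : graph) :
  graph_iso (tensor K2 G) (tensor K2 H) ->
  exists (f : vert G -> vert H) (g : vert H -> vert G),
    (forall v, g (f v) = v) /\ (forall w, f (g w) = w) /\
    maps_nbhds_into G H f /\ maps_nbhds_into H G g.
Proof.
  intros [fwd [bwd [bwd_fwd [fwd_bwd fwd_adj]]]].
  set (d := Build_graph_isomorphism _ _ fwd bwd bwd_fwd fwd_bwd fwd_adj).
  destruct (adapted_exists G H d) as [A hA].
  pose proof (adapted_inverse G H d A hA) as hB.
  set (B q := A (bwd q)) in hB.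
  exists (half d A), (half (iso_inv d) B).
  split; [|split; [|split]].
  - apply half_cancel; [apply hA|apply hB|].
    intros p hp. unfold B. simpl. rewrite bwd_fwd. exact hp.
  - apply (half_cancel H G (iso_inv d) B A); [apply hB|apply hA|].
    intros q hq. exact hq.
  - apply half_nbhd, hA.
  - apply half_nbhd, hB.
Qed.

Lemma map_cancel {A B : Type} (f : A -> B) (g : B -> A) :
  (forall y, f (g y) = y) -> forall t, map f (map g t) = t.
Proof. intros fg t. rewrite map_map, (map_ext _ (fun y => y) fg). apply map_id. Qed.

Lemma has_common_nbr_map (G H : graph) (f : vert G -> vert H) s :
  maps_nbhds_into G H f -> has_common_nbr G s -> has_common_nbr H (map f s).
Proof.
  intros f_nbhd [u hu]. destruct (f_nbhd u) as [w hw]. exists w.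
  intros y hy. apply in_map_iff in hy. destruct hy as [x [<- hx]]. auto.
Qed.

Lemma has_common_nbr_iff (G H : graph) (f : vert G -> vert H) (g : vert H -> vert G) :
  (forall v, g (f v) = v) -> maps_nbhds_into G H f -> maps_nbhds_into H G g ->
  forall s, has_common_nbr G s <-> has_common_nbr H (map f s).
Proof.
  intros gf f_nbhd g_nbhd s. split; [apply has_common_nbr_map, f_nbhd|].
  intro hs. rewrite <- (map_cancel g f gf s). apply has_common_nbr_map; assumption.
Qed.

Lemma locally_finite_nbhd_list (G : graph) :
  locally_finite G -> forall v, exists l, forall w, In w l <-> adj G v w.
Proof.
  intros lf v. destruct (lf v) as [l hl].
  exists (filter (fun w => if excluded_middle_informative (adj G v w)
                           then true else false) l).
  intro w. rewrite filter_In.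
  destruct excluded_middle_informative as [h|h]; split.
  - intros _. exact h.
  - intro hw. split; auto.
  - intros [_ e]. discriminate.
  - intro hw. contradiction.
Qed.

Lemma maps_nbhds_into_of_common_nbr (G H : graph) (f : vert G -> vert H) :
  locally_finite G ->
  (forall s, has_common_nbr G s -> has_common_nbr H (map f s)) ->
  maps_nbhds_into G H f.
Proof.
  intros lf f_cn u. destruct (locally_finite_nbhd_list G lf u) as [l hl].
  destruct (f_cn l) as [w hw]; [exists u; apply hl|].
  exists w. intros x hx. apply hw, in_map, hl, hx.
Qed.

Lemma nc_simplex_has_common_nbr (G : graph) s :
  nc_simplex G s <-> has_common_nbr G (map (@proj1_sig _ _) s).
Proof.
  split; intros [v hv]; exists v.
  - intros x hx. apply in_map_iff in hx. destruct hx as [y [<- hy]]. auto.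
  - intros x hx. apply hv, in_map, hx.
Qed.

Lemma nc_iso_iff_vertex_bijection (G H : graph) :
  no_isolated G -> no_isolated H ->
  nc_iso G H <->
  exists (f : vert G -> vert H) (g : vert H -> vert G),
    (forall v, g (f v) = v) /\ (forall w, f (g w) = w) /\
    (forall s, has_common_nbr G s <-> has_common_nbr H (map f s)).
Proof.
  intros hG hH.
  set (liftG v := exist (fun v => ~ isolated G v) v (hG v)).
  set (liftH w := exist (fun w => ~ isolated H w) w (hH w)).
  assert (sig_inj := fun A (P : A -> Prop) =>
                       eq_sig_hprop (P := P) (fun x => proof_irrelevance _)).
  split.
  - intros [f [g [gf [fg f_simplex]]]].
    exists (fun v => proj1_sig (f (liftG v))), (fun w => proj1_sig (g (liftH w))).
    split; [|split].
    + intro v. assert (liftH (proj1_sig (f (liftG v))) = f (liftG v)) as -> by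
        now apply sig_inj.
      rewrite gf. reflexivity.
    + intro w. assert (liftG (proj1_sig (g (liftH w))) = g (liftH w)) as -> by
        now apply sig_inj.
      rewrite fg. reflexivity.
    + intro s. rewrite <- (map_cancel (@proj1_sig _ _) liftG (fun v => eq_refl) s) at 1.
      rewrite <- nc_simplex_has_common_nbr, f_simplex, nc_simplex_has_common_nbr.
      rewrite !map_map.
      reflexivity.
  - intros [f [g [gf [fg f_cn]]]].
    exists (fun x => liftH (f (proj1_sig x))), (fun y => liftG (g (proj1_sig y))).
    split; [|split].
    + intro x. apply sig_inj. simpl. apply gf.
    + intro y. apply sig_inj. simpl. apply fg.
    + intro s. rewrite !nc_simplex_has_common_nbr, f_cn, !map_map. reflexivity.
Qed.

Section StiffTwist.

Variables (G H : graph) (f : vert G -> vert H) (g : vert H -> vert G).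
Hypotheses (gf : forall v, g (f v) = v) (stG : stiff G).

Lemma stiff_twist :
  maps_nbhds_into G H f -> maps_nbhds_into H G g ->
  exists h : vert G -> vert H, forall v x, adj G v x <-> adj H (h v) (f x).
Proof.
  intros f_nbhd g_nbhd.
  destruct (choice _ f_nbhd) as [h hh].
  exists h. intros v x. split; [apply hh|]. intro hx.
  destruct (g_nbhd (h v)) as [v' hv'].
  assert (v = v') as ->.
  { apply stG. intros y hy. rewrite <- (gf y). apply hv', hh, hy. }
  rewrite <- (gf x). apply hv', hx.
Qed.

Lemma twist_cancel (h : vert G -> vert H) (h' : vert H -> vert G) :
  (forall v x, adj G v x <-> adj H (h v) (f x)) ->
  (forall w y, adj H w y <-> adj G (h' w) (g y)) ->
  forall v, h' (h v) = v.
Proof.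
  intros hh hh' v. symmetry. apply stG. intros x hx.
  rewrite <- (gf x). apply hh', hh, hx.
Qed.

End StiffTwist.

Lemma adj_iff_sym (X : graph) (x y : vert X) : adj X x y <-> adj X y x.
Proof. split; apply adj_sym. Qed.

Lemma tensor_K2_iso_of_twist (G H : graph)
    (f h : vert G -> vert H) (g h' : vert H -> vert G) :
  (forall v, g (f v) = v) -> (forall w, f (g w) = w) ->
  (forall v, h' (h v) = v) -> (forall w, h (h' w) = w) ->
  (forall v x, adj G v x <-> adj H (h v) (f x)) ->
  graph_iso (tensor K2 G) (tensor K2 H).
Proof.
  intros gf fg hh' h'h twist.
  exists (fun p : bool * vert G =>
            if fst p then (true, h (snd p)) else (false, f (snd p))).
  exists (fun q : bool * vert H =>
            if fst q then (true, h' (snd q)) else (false, g (snd q))).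
  split; [|split].
  - intros [[|] v]; simpl; [rewrite hh'|rewrite gf]; reflexivity.
  - intros [[|] w]; simpl; [rewrite h'h|rewrite fg]; reflexivity.
  - assert (twist' : forall v x, adj G v x <-> adj H (f v) (h x)).
    { intros v x. rewrite (adj_iff_sym G), twist. apply adj_iff_sym. }
    intros [[|] v] [[|] x]; cbn [fst snd]; rewrite !tensor_K2_adj.
    + split; intros [hb _]; congruence.
    + rewrite twist. reflexivity.
    + rewrite twist'. reflexivity.
    + split; intros [hb _]; congruence.
Qed.

Theorem theorem1p1 (G H : graph) (hG : no_isolated G) (hH : no_isolated H) :
  (graph_iso (tensor K2 G) (tensor K2 H) -> nc_iso G H) /\
  (locally_finite G -> locally_finite H -> stiff G -> stiff H ->
   nc_iso G H -> graph_iso (tensor K2 G) (tensor K2 H)).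
Proof.
  split.
  - intro iso. apply nc_iso_iff_vertex_bijection; [exact hG|exact hH|].
    destruct (tensor_K2_iso_nbhd_bijection G H iso)
      as [f [g [gf [fg [f_nbhd g_nbhd]]]]].
    exists f, g. split; [exact gf|split; [exact fg|]].
    apply (has_common_nbr_iff G H f g); assumption.
  - intros lfG lfH stG stH nc.
    apply nc_iso_iff_vertex_bijection in nc; [|exact hG|exact hH].
    destruct nc as [f [g [gf [fg f_cn]]]].
    assert (f_nbhd : maps_nbhds_into G H f).
    { apply maps_nbhds_into_of_common_nbr; [exact lfG|]. intro s. apply f_cn. }
    assert (g_nbhd : maps_nbhds_into H G g).
    { apply maps_nbhds_into_of_common_nbr; [exact lfH|].
      intros t ht. apply f_cn. rewrite map_cancel; assumption. }
    destruct (stiff_twist G H f g gf stG f_nbhd g_nbhd) as [h twist].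
    destruct (stiff_twist H G g f fg stH g_nbhd f_nbhd) as [h' twist'].
    apply (tensor_K2_iso_of_twist G H f h g h' gf fg); [| |exact twist].
    + apply (twist_cancel G H f g gf stG h h' twist twist').
    + apply (twist_cancel H G g f fg stH h' h twist' twist).
Qed.
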